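(* Let $\widehat{\mathbf M}=(\hat{\mathbb X},\hat{\mathbb U},\mathbb Y,\hat x_0,\hat{\mathbf t},\hat h)$ and $\mathbf M=(\mathbb X,\mathbb U,\mathbb Y,x_0,\mathbf t,h)$ be gMDPs with $\widehat{\mathbf M}\preceq^\delta_\epsilon\mathbf M$ via relation $\mathcal R$, interface $\mathcal U_v$ and lifted kernel $\mathbb W_{\mathbf t}$, let $\psi$ be an scLTL formula with DFA $\mathcal A_\psi=(Q,q_0,\Sigma,F,\tau)$, and let $\mu:\hat{\mathbb X}\times Q\to\hat{\mathbb U}$ be a mapping. Let $V:\hat{\mathbb X}\times Q\to[0,1]$ and $V_{\|}:\hat{\mathbb X}\times\mathbb X\times Q\to[0,1]$ satisfy $V(\hat x,q)\le V_{\|}(\hat x,x,q)$ for all $(\hat x,x)\in\mathcal R$ and $q\in Q$. Then $$\mathbf T^\mu_{\epsilon,\delta}(V)(\hat x,q)\le\mathbf T^\mu(V_{\|})(\hat x,x,q)\qquad\forall(\hat x,x)\in\mathcal R,\ q\in Q,$$ where $\mathbf T^\mu_{\epsilon,\delta}$ is the $(\epsilon,\delta)$-robust operator with respect to $\widehat{\mathbf M}$ and $\mathbf T^\mu$ is the Bellman operator with respect to $(\widehat{\mathbf M}\|_{\mathcal R}\mathbf M)\otimes\mathcal A_\psi$.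
   Context: A gMDP is $(\mathbb X,\mathbb U,\mathbb Y,x_0,\mathbf t,h)$ with Polish state/input spaces, output space $\mathbb Y$ with metric $\mathbf d_{\mathbb Y}$, initial state, stochastic kernel $\mathbf t(\cdot\mid x,u)$ and measurable output map $h$. $\widehat{\mathbf M}\preceq^\delta_\epsilon\mathbf M$ means there exist an interface $\mathcal U_v:\hat{\mathbb U}\times\hat{\mathbb X}\times\mathbb X\to\mathcal P(\mathbb U)$, a measurable relation $\mathcal R\subseteq\hat{\mathbb X}\times\mathbb X$ and a Borel kernel $\mathbb W_{\mathbf t}(\cdot\mid\hat u,\hat x,x)$ on $\hat{\mathbb X}\times\mathbb X$ with $(\hat x_0,x_0)\in\mathcal R$ and, for all $(\hat x,x)\in\mathcal R$: $\mathbf d_{\mathbb Y}(\hat h(\hat x),h(x))\le\epsilon$, and for all $\hat u$, $\mathbb W=\mathbb W_{\mathbf t}(\cdot\mid\hat u,\hat x,x)$ has marginals $\hat{\mathbf t}(\cdot\mid\hat x,\hat u)$ on $\hat{\mathbb X}$ and $\mathbf t(\cdot\mid x,\mathcal U_v(\hat u,\hat x,x))$ on $\mathbb X$, and $\mathbb W(\mathcal R)\ge1-\delta$. The coupling gMDP $\widehat{\mathbf M}\|_{\mathcal R}\mathbf M$ has state space $\hat{\mathbb X}\times\mathbb X$, input space $\hat{\mathbb U}$, initial state $(\hat x_0,x_0)$, kernel $\mathbb W_{\mathbf t}$ and output map $(\hat x,x)\mapsto h(x)$. $\Sigma=2^{\mathsf{AP}}$, $\mathsf L:\mathbb Y\to\Sigma$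 measurable labelling, $\mathcal A_\psi$ a DFA (accepting set $F$, transition $\tau:Q\times\Sigma\to Q$) for $\psi$. The product $(\widehat{\mathbf M}\|_{\mathcal R}\mathbf M)\otimes\mathcal A_\psi$ has states $\hat{\mathbb X}\times\mathbb X\times Q$ and kernel $\mathbf 1_{\{q'\}}(\tau(q,\mathsf L(h(x'))))\,\mathbb W_{\mathbf t}(d\hat x'\times dx'\mid\hat u,\hat x,x)$; its Bellman operator is $\mathbf T^\mu(V_{\|})(\hat x,x,q)=\int\max\{\mathbf 1_F(q'),V_{\|}(\hat x',x',q')\}$ against this kernel with $\hat u=\mu(\hat x,q)$. With $\mathcal N_\epsilon(y)=\{y'\in\mathbb Y:\mathbf d_{\mathbb Y}(y',y)\le\epsilon\}$ and $\bar\tau(q,\hat x')=\{\tau(q,\alpha):\alpha\in\mathsf L(\mathcal N_\epsilon(\hat h(\hat x')))\}$, the $(\epsilon,\delta)$-robust operator is $\mathbf T^\mu_{\epsilon,\delta}(V)(\hat x,q)=\mathbf L\big(\int_{\hat{\mathbb X}}\min_{q'\in\bar\tau(q,\hat x')}\max\{\mathbf 1_F(q'),V(\hat x',q')\}\,\hat{\mathbf t}(d\hat x'\mid\hat x,\mu(\hat x,q))-\delta\big)$ with $\mathbf L(r)=\min(1,\max(0,r))$. *)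

From HB Require Import structures.
From mathcomp Require Import all_boot all_order all_algebra.
From mathcomp Require Import all_classical all_reals.
From mathcomp Require Import ereal topology normedtype sequences measure
  lebesgue_measure lebesgue_integral probability kernel.

Set Implicit Arguments.
Unset Strict Implicit.
Unset Printing Implicit Defensive.
Import Order.TTheory GRing.Theory Num.Theory.
Local Open Scope classical_set_scope.
Local Open Scope ring_scope.
Local Open Scope ereal_scope.

Definition is_metric (R : realType) (Y : Type) (dY : Y -> Y -> R) : Prop :=
  [/\ forall y y', (0 <= dY y y')%R,
      forall y y', dY y y' = 0%R <-> y = y',
      forall y y', dY y y' = dY y' y &
      forall y y' y'', (dY y y'' <= dY y y' + dY y' y'')%R].

Definition clamp01 (R : realType) (r : \bar R) : \bar R :=
  mine 1%E (maxe 0%E r).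

(* The kernel t(. | x, U_v(uh, xh, x)): the input distribution U_v
   integrated against the kernel t. *)
Definition mixed_kernel (R : realType) d dU (X : measurableType d)
    (U : measurableType dU) (t : R.-pker (X * U)%type ~> X)
    (nu : probability U R) (x : X) (B : set X) : \bar R :=
  \int[nu]_u t (x, u) B.

Definition approx_sim (R : realType)
    (dXh dUh dX dU dY : measure_display)
    (Xh : measurableType dXh) (Uh : measurableType dUh)
    (X : measurableType dX) (U : measurableType dU) (Y : measurableType dY)
    (dist : Y -> Y -> R) (eps delta : R)
    (xh0 : Xh) (that : R.-pker (Xh * Uh)%type ~> Xh) (hhat : Xh -> Y)
    (x0 : X) (t : R.-pker (X * U)%type ~> X) (h : X -> Y)
    (Uv : Uh -> Xh -> X -> probability U R)
    (Rel : set (Xh * X)%type)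
    (W : R.-pker (Uh * Xh * X)%type ~> (Xh * X)%type) : Prop :=
  [/\ measurable Rel,
      Rel (xh0, x0) &
      forall xh x, Rel (xh, x) ->
        (dist (hhat xh) (h x) <= eps)%R /\
        forall uh : Uh,
          [/\ forall A, measurable A ->
                W (uh, xh, x) (A `*` setT) = that (xh, uh) A,
              forall B, measurable B ->
                W (uh, xh, x) (setT `*` B) = mixed_kernel t (Uv uh xh x) x B &
              W (uh, xh, x) Rel >= (1 - delta)%:E]].

Definition tau_bar (R : realType) (Y : Type) (dist : Y -> Y -> R) (eps : R)
    (AP Q : finType) (tau : Q -> {set AP} -> Q) (Lab : Y -> {set AP})
    (q : Q) (yh : Y) : {set Q} :=
  [set q' : Q | `[< exists y : Y, (dist y yh <= eps)%R /\ q' = tau q (Lab y) >]].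

Definition robust_op (R : realType) (dXh dUh : measure_display)
    (Xh : measurableType dXh) (Uh : measurableType dUh) (Y : Type)
    (dist : Y -> Y -> R) (eps delta : R)
    (that : R.-pker (Xh * Uh)%type ~> Xh) (hhat : Xh -> Y)
    (AP Q : finType) (F : {set Q}) (tau : Q -> {set AP} -> Q)
    (Lab : Y -> {set AP}) (mu : Xh -> Q -> Uh)
    (V : Xh -> Q -> R) (xh : Xh) (q : Q) : \bar R :=
  clamp01 ((\int[that (xh, mu xh q)]_xh'
     (\big[Num.min/1%R]_(q' in tau_bar dist eps tau Lab q (hhat xh'))
        Num.max (if q' \in F then 1%R else 0%R) (V xh' q'))%:E) - delta%:E).

(* Bellman operator of the product (Mhat ||_Rel M) (x) A_psi, whose kernel is
   1_{q'}(tau(q, L(h x'))) W(dxh' x dx' | mu(xh,q), xh, x); integrating out the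
   Dirac component in Q gives: *)
Definition bellman_op (R : realType) (dXh dUh dX : measure_display)
    (Xh : measurableType dXh) (Uh : measurableType dUh)
    (X : measurableType dX) (Y : Type)
    (h : X -> Y) (W : R.-pker (Uh * Xh * X)%type ~> (Xh * X)%type)
    (AP Q : finType) (F : {set Q}) (tau : Q -> {set AP} -> Q)
    (Lab : Y -> {set AP}) (mu : Xh -> Q -> Uh)
    (Vp : Xh -> X -> Q -> R) (xh : Xh) (x : X) (q : Q) : \bar R :=
  \int[W (mu xh q, xh, x)]_z
     (let q' := tau q (Lab (h z.2)) in
      Num.max (if q' \in F then 1%R else 0%R) (Vp z.1 z.2 q'))%:E.

(* On the relation, the abstract output is eps-close to the concrete one, so
   the concrete automaton successor tau(q, L(h x')) is among the successors
   tau_bar(q, xh') over which the robust operator minimises; hence the robust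
   integrand is below the Bellman integrand on Rel.  Since that(.|xh, u) is the
   first marginal of the lifted kernel W, integrating against W loses at most
   W(~Rel) <= delta, the mass off the relation; clamping to [0,1] is harmless as
   the Bellman value is nonnegative. *)
From mathcomp Require Import all_boot all_order all_algebra.
From mathcomp Require Import all_classical all_reals.
From mathcomp Require Import ereal topology normedtype sequences measure
  lebesgue_measure lebesgue_integral probability kernel.
From mathcomp Require Import measurable_realfun numfun.
Import Order.TTheory GRing.Theory Num.Theory.
Local Open Scope classical_set_scope.
Local Open Scope ring_scope.

Section integral_bounds.
Local Open Scope ereal_scope.
Context {d} {T : measurableType d} {R : realType}.
Variable mu : {measure set T -> \bar R}.

(* No measurability is needed: the integral of a nonnegative function is the
   supremum of the integrals of the simple functions below it. *)
Lemma ge0_le_integralT (f g : T -> \bar R) :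
  (forall x, 0 <= f x) -> (forall x, f x <= g x) ->
  \int[mu]_x f x <= \int[mu]_x g x.
Proof.
move=> f0 fg; have g0 x : 0 <= g x by exact: le_trans (f0 x) (fg x).
rewrite !ge0_integralTE //; apply: ge_ereal_sup => _ [s /= sf <-].
by apply: ereal_sup_ubound; exists s => //= x; exact: le_trans (sf x) (fg x).
Qed.

Lemma integral_le_indic_measureC (D : set T) (u : T -> R) :
  measurable D -> measurable_fun setT u -> (forall x, 0 <= u x <= 1)%R ->
  \int[mu]_x (u x)%:E <= \int[mu]_x (u x * \1_D x)%:E + mu (~` D).
Proof.
move=> mD mfu u01.
have mDC : measurable (~` D) by exact: measurableC.
have mu1D : measurable_fun setT (fun x => (u x * \1_D x)%:E).
  by apply/measurable_EFinP; apply: measurable_funM => //; exact: measurable_indic.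
have m1DC : measurable_fun setT (fun x => (\1_(~` D) x : R)%:E).
  by apply/measurable_EFinP; exact: measurable_indic.
rewrite -(setIT (~` D)) -integral_indic // -ge0_integralD //; last first.
  by move=> x _; rewrite lee_fin mulr_ge0 //; case/andP: (u01 x).
apply: ge0_le_integral => //.
- by move=> x _; rewrite lee_fin; case/andP: (u01 x).
- exact/measurable_EFinP.
- exact: emeasurable_funD.
move=> x _; rewrite /indic in_setC; have /andP[_ u1] := u01 x.
by case: (x \in D) => /=; rewrite ?mulr1 ?adde0 // mulr0 add0e lee_fin.
Qed.

Lemma measureC_le {A : set T} {r : R} : mu setT = 1 -> measurable A ->
  (1 - r)%:E <= mu A -> mu (~` A) <= r%:E.
Proof.
move=> muT mA rA.
have muA : mu A \is a fin_num.
  rewrite ge0_fin_numE // (@le_lt_trans _ _ (mu setT)) ?muT ?ltry //.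
  by rewrite -muT; apply: le_measure; rewrite ?inE.
have -> : mu (~` A) = 1 - mu A.
  rewrite -muT -(setUv A) measureU ?setICr //; last exact: measurableC.
  by rewrite [mu A + _]addeC addeK.
rewrite leeBlDr //; apply: le_trans (leeD2l _ rA).
by rewrite -EFinD addrC subrK.
Qed.

End integral_bounds.

Section fst_marginal.
Local Open Scope ereal_scope.
Context {d1 d2} {A : measurableType d1} {B : measurableType d2} {R : realType}.
Context {P : {measure set A -> \bar R}} {W : {measure set (A * B) -> \bar R}}.
Hypothesis W_fst : forall S, measurable S -> W (S `*` setT) = P S.

Lemma integral_fst_marginal (f : A -> \bar R) :
  measurable_fun setT f -> (forall a, 0 <= f a) ->
  \int[P]_a f a = \int[W]_z f z.1.
Proof.
move=> mf f0.
rewrite (eq_measure_integral (pushforward W fst)); last first.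
  by move=> S mS _; rewrite /pushforward /= -W_fst // setXT.
by rewrite ge0_integral_pushforward // preimage_setT.
Qed.

Import HBNNSimple.

Lemma coupling_integral_le {Rel : set (A * B)} {f : A -> R} {g : A * B -> R} :
  measurable Rel -> (forall a, 0 <= f a <= 1)%R -> (forall z, 0 <= g z)%R ->
  (forall z, Rel z -> f z.1 <= g z)%R ->
  \int[P]_a (f a)%:E <= \int[W]_z (g z)%:E + W (~` Rel).
Proof.
move=> mRel f01 g0 fg.
(* [f] need not be measurable: go through the simple functions below it. *)
rewrite ge0_integralTE; last by move=> a; rewrite lee_fin; case/andP: (f01 a).
apply: ge_ereal_sup => _ [s /= sf <-].
have s01 a : (0 <= s a <= 1)%R.
  have /andP[_ f1] := f01 a.
  by rewrite fun_ge0 /= -lee_fin (le_trans (sf a)) ?lee_fin.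
rewrite -integralT_nnsfun integral_fst_marginal //; first last.
- by move=> a; rewrite lee_fin fun_ge0.
- exact/measurable_EFinP/measurable_funP.
have ms1 : measurable_fun setT (fun z : A * B => s z.1).
  by apply: measurableT_comp => //; exact: measurable_funP.
apply: le_trans
  (integral_le_indic_measureC W Rel _ mRel ms1 (fun z => s01 z.1)) _.
apply: leeD2r; apply: ge0_le_integralT => z; rewrite lee_fin.
  by rewrite mulr_ge0 // fun_ge0.
rewrite /indic; case: (boolP (z \in Rel)) => [/set_mem Rz | _] /=.
  by rewrite mulr1 (le_trans _ (fg z Rz)) // -lee_fin.
by rewrite mulr0.
Qed.

End fst_marginal.

Lemma clamp01_le {R : realType} (r s : \bar R) :
  (0 <= s)%E -> (r <= s)%E -> (clamp01 r <= s)%E.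
Proof. by move=> s0 rs; rewrite /clamp01 ge_min ge_max s0 rs orbT. Qed.

Lemma max_indicator_ge0 {R : realType} (b : bool) (v : R) :
  0 <= v -> 0 <= Num.max (if b then 1 else 0) v.
Proof. by move=> v0; rewrite le_max v0 orbT. Qed.

Lemma tau_bar_bigmin_le {R : realType} {Y : Type} {dist : Y -> Y -> R}
    {eps : R} {AP Q : finType} {tau : Q -> {set AP} -> Q}
    {Lab : Y -> {set AP}} {phi : Q -> R} {q : Q} {y yh : Y} :
  dist y yh <= eps ->
  \big[Num.min/1]_(q' in tau_bar dist eps tau Lab q yh) phi q'
    <= phi (tau q (Lab y)).
Proof. by move=> y_yh; apply: bigmin_le_cond; rewrite inE; apply/asboolP; exists y. Qed.

Theorem lemma3 (R : realType) (dXh dUh dX dU dY : measure_display)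
    (Xh : measurableType dXh) (Uh : measurableType dUh)
    (X : measurableType dX) (U : measurableType dU) (Y : measurableType dY)
    (dist : Y -> Y -> R) (eps delta : R)
    (xh0 : Xh) (that : R.-pker (Xh * Uh)%type ~> Xh) (hhat : Xh -> Y)
    (x0 : X) (t : R.-pker (X * U)%type ~> X) (h : X -> Y)
    (Uv : Uh -> Xh -> X -> probability U R)
    (Rel : set (Xh * X)%type) (W : R.-pker (Uh * Xh * X)%type ~> (Xh * X)%type)
    (AP Q : finType) (q0 : Q) (F : {set Q}) (tau : Q -> {set AP} -> Q)
    (Lab : Y -> {set AP})
    (mu : Xh -> Q -> Uh) (V : Xh -> Q -> R) (Vp : Xh -> X -> Q -> R) :
  is_metric dist ->
  0 <= eps -> 0 <= delta <= 1 ->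
  measurable_fun setT hhat -> measurable_fun setT h ->
  (forall alpha : {set AP}, measurable (Lab @^-1` [set alpha])) ->
  approx_sim dist eps delta xh0 that hhat x0 t h Uv Rel W ->
  (forall xh q, 0 <= V xh q <= 1) ->
  (forall xh x q, 0 <= Vp xh x q <= 1) ->
  (forall xh x q, Rel (xh, x) -> V xh q <= Vp xh x q) ->
  forall xh x q, Rel (xh, x) ->
    (robust_op dist eps delta that hhat F tau Lab mu V xh q
     <= bellman_op h W F tau Lab mu Vp xh x q)%E.
Proof.
move=> [_ _ dist_sym _] _ _ _ _ _ [mRel _ sim] V01 Vp01 V_Vp xh x q Rxh.
have V_ge0 xh' q' : 0 <= V xh' q' by case/andP: (V01 xh' q').
have Vp_ge0 xh' x' q' : 0 <= Vp xh' x' q' by case/andP: (Vp01 xh' x' q').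
have [_ /(_ (mu xh q)) [W_fst _ W_Rel]] := sim xh x Rxh.
have W_RelC := measureC_le _ (prob_kernel _) mRel W_Rel.
rewrite /robust_op /bellman_op; apply: clamp01_le.
  by apply: integral_ge0 => z _; rewrite lee_fin max_indicator_ge0.
rewrite leeBlDr //; apply: le_trans _ (leeD2l _ W_RelC).
apply: (coupling_integral_le W_fst mRel).
- move=> xh'; rewrite bigmin_le_id andbT.
  by apply: le_bigmin => // q' _; rewrite max_indicator_ge0.
- by move=> z; rewrite max_indicator_ge0.
- move=> [a b] /= Rab; have [dist_ab _] := sim a b Rab.
  rewrite dist_sym in dist_ab.
  by apply: le_trans (tau_bar_bigmin_le dist_ab) _; rewrite le_max2 // V_Vp.
Qed.
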